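(* Let $N$ be a positive odd integer, $\alpha,\beta$ real with $((\alpha+1)/2)_k\neq0$ and $((\alpha+3)/2)_k\ne0$ for $k\le (N-1)/2$, and put $\eta=\tfrac{\alpha+\beta+2}{4}$. Let $P_n$ be the monic dual $-1$ Hahn polynomials defined in the context. Then, as polynomial identities in $x$, for $0\le n\le (N-1)/2$: $$P_{2n}(x-1)=16^n\left(\tfrac{1-N}{2}\right)_n\left(\tfrac{\alpha+1}{2}\right)_n\;{}_3F_2\!\left(\begin{matrix}-n,\ \eta+\tfrac x4,\ \eta-\tfrac x4\\ -\tfrac{N-1}{2},\ \tfrac{\alpha+1}{2}\end{matrix};1\right),$$ $$P_{2n+1}(x-1)=16^n\left(\tfrac{1-N}{2}\right)_n\left(\tfrac{\alpha+3}{2}\right)_n\,(x+\alpha-\beta)\;{}_3F_2\!\left(\begin{matrix}-n,\ \eta+\tfrac x4,\ \eta-\tfrac x4\\ -\tfrac{N-1}{2},\ \tfrac{\alpha+3}{2}\end{matrix};1\right).$$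
   Context: $(c)_k=c(c+1)\cdots(c+k-1)$, $(c)_0=1$, and ${}_3F_2\!\left(\begin{matrix}-n,a_2,a_3\\ b_1,b_2\end{matrix};1\right)=\sum_{k=0}^n\frac{(-n)_k(a_2)_k(a_3)_k}{(b_1)_k(b_2)_k\,k!}$. For $N$ odd: $b_n^{(-1)}=-1-\alpha+\beta$ for $n$ even, $b_n^{(-1)}=-1+\alpha-\beta$ for $n$ odd; $u_n^{(-1)}=4n(N+1-n)$ for $n$ even, $u_n^{(-1)}=4(\alpha+n)(\beta+N+1-n)$ for $n$ odd. The monic dual $-1$ Hahn polynomials are defined by $P_{-1}=0$, $P_0=1$, $P_{n+1}(x)=(x-b_n^{(-1)})P_n(x)-u_n^{(-1)}P_{n-1}(x)$ for $n\ge0$. *)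

From HB Require Import structures.
From mathcomp Require Import all_boot all_order all_algebra.
Set Implicit Arguments. Unset Strict Implicit. Unset Printing Implicit Defensive.
Import Order.TTheory GRing.Theory Num.Theory.
Local Open Scope ring_scope.

Definition poch (T : comNzRingType) (c : T) (k : nat) : T :=
  \prod_(i < k) (c + i%:R).

(* 3F2(-n, a2, a3; b1, b2; 1) with polynomial upper parameters a2, a3 and
   scalar lower parameters b1, b2 : the terminating sum over k = 0..n. *)
Definition F32 (R : fieldType) (n : nat) (a2 a3 : {poly R}) (b1 b2 : R)
  : {poly R} :=
  \sum_(k < n.+1)
     ((poch (- n%:R) k) / (poch b1 k * poch b2 k * (k`!)%:R))
       *: (poch a2 k * poch a3 k).

(* Recurrence coefficients for N odd. *)
Definition bcoef (R : fieldType) (al be : R) (n : nat) : R :=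
  if odd n then -1 + al - be else -1 - al + be.

Definition ucoef (R : fieldType) (N : nat) (al be : R) (n : nat) : R :=
  if odd n then 4 * (al + n%:R) * (be + N%:R + 1 - n%:R)
  else 4 * n%:R * (N%:R + 1 - n%:R).

(* (P_{n-1}, P_n) *)
Fixpoint Hpair (R : fieldType) (N : nat) (al be : R) (n : nat)
  : {poly R} * {poly R} :=
  match n with
  | 0 => (0, 1)
  | m.+1 => let: (a, b) := Hpair N al be m in
            (b, ('X - (bcoef al be m)%:P) * b - (ucoef N al be m)%:P * a)
  end.

Definition dualHahn (R : fieldType) (N : nat) (al be : R) (n : nat) : {poly R} :=
  (Hpair N al be n).2.

From HB Require Import structures.
From mathcomp Require Import all_boot all_order all_algebra.
From mathcomp Require Import ring zify.
Set Implicit Arguments. Unset Strict Implicit. Unset Printing Implicit Defensive.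
Import Order.TTheory GRing.Theory Num.Theory.
Local Open Scope ring_scope.

(* Put a = (al+1)/2, e = (al+be+2)/4 and M = (N-1)/2, so that al = 2a-1,
   be = 4e-2a-1 and N = 2M+1, and let z = (x/4)^2.  Since
   (e + x/4)_k (e - x/4)_k = phi_k := prod_(i<k) ((e+i)^2 - z), clearing the
   denominators of the 3F2 series turns it into the expansion
     G_n(b) = sum_(k<=n) g_(n,k)(b) phi_k,
     g_(n,k)(b) = (-1)^k C(n,k) (b+k)_(n-k) (k-M)_(n-k)          (F32_hahnG).
   The theorem then says P_2n(x-1) = 16^n G_n(a) and
   P_(2n+1)(x-1) = 16^n (x+al-be) G_n(a+1), which follows by induction on n
   from the three-term recurrence: its two steps are exactly the contiguity
   relations
     G_(n+1)(a+1) = G_(n+1)(a) - (n+1)(M-n) G_n(a+1),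
     G_(n+1)(a)   = (z - (a-e)^2) G_n(a+1) - (a+n)(2e-a+M-n) G_n(a),
   valid for an arbitrary z, together with 16 z = x^2.  The contiguity
   relations are proved coefficientwise in the basis phi_k, using
   z phi_k = (e+k)^2 phi_k - phi_(k+1). *)

(* An equation holds if the difference of its sides is a combination of
   vanishing quantities; used to feed side relations to [ring]. *)
Lemma eq_modulo (T : comNzRingType) (x y t d : T) : x - y = t * d -> d = 0 -> x = y.
Proof. by move=> h hd; apply/eqP; rewrite -subr_eq0 h hd mulr0. Qed.

Lemma eq_modulo2 (T : comNzRingType) (x y t1 d1 t2 d2 : T) :
  x - y = t1 * d1 + t2 * d2 -> d1 = 0 -> d2 = 0 -> x = y.
Proof. by move=> h h1 h2; apply/eqP; rewrite -subr_eq0 h h1 h2 !mulr0 addr0. Qed.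

Section Pochhammer.
Variable T : comNzRingType.
Implicit Types (c : T) (k j : nat).

Lemma poch0 c : poch c 0 = 1.
Proof. by rewrite /poch big_ord0. Qed.

Lemma pochS c k : poch c k.+1 = poch c k * (c + k%:R).
Proof. by rewrite /poch big_ord_recr. Qed.

Lemma pochSl c k : poch c k.+1 = c * poch (c + 1) k.
Proof.
rewrite /poch big_ord_recl addr0; congr (_ * _).
by apply: eq_bigr => i _; rewrite /= -nat1r addrA.
Qed.

Lemma pochD c k j : poch c (k + j) = poch c k * poch (c + k%:R) j.
Proof.
elim: j => [|j IH]; first by rewrite addn0 poch0 mulr1.
by rewrite addnS !pochS IH natrD -mulrA addrA.
Qed.

Lemma poch_negn (n k : nat) : (k <= n)%N ->
  poch (- n%:R : T) k = (-1) ^+ k * ('C(n, k) * k`!)%:R.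
Proof.
rewrite bin_ffact; elim: k => [|k IH] hk; first by rewrite poch0 ffactn0 expr0 mulr1.
rewrite pochS IH 1?ltnW // ffactnSr natrM natrB 1?ltnW // exprS; ring.
Qed.
End Pochhammer.

Lemma poch_negn_neq0 (R : numDomainType) (M k : nat) : (k <= M)%N ->
  poch (- M%:R : R) k != 0.
Proof.
elim: k => [|k IH] hk; first by rewrite poch0 oner_eq0.
rewrite pochS mulf_neq0 ?IH 1?ltnW // addrC subr_eq0 eqr_nat.
by rewrite neq_ltn hk.
Qed.

Section Coefficients.
Variables (T : comNzRingType) (M : nat).

Definition hcoef (b : T) (n k : nat) : T :=
  (-1) ^+ k * ('C(n, k))%:R * poch (b + k%:R) (n - k) * poch (k%:R - M%:R) (n - k).

Lemma hcoef_small b n k : (n < k)%N -> hcoef b n k = 0.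
Proof. by move=> h; rewrite /hcoef bin_small // mulr0 !mul0r. Qed.

Lemma hcoef_diag b n : hcoef b n n = (-1) ^+ n.
Proof. by rewrite /hcoef subnn binn !poch0 !mulr1. Qed.

Lemma hcoef_split b k i : hcoef b (k + i) k
  = (-1) ^+ k * ('C(k + i, k))%:R * poch (b + k%:R) i * poch (k%:R - M%:R) i.
Proof. by rewrite /hcoef addKn. Qed.

Lemma hcoef_lower_interior a k i :
  hcoef a (k + i).+1 k - ((k + i).+1%:R * (M%:R - (k + i)%:R)) * hcoef (a + 1) (k + i) k
  = hcoef (a + 1) (k + i).+1 k.
Proof.
rewrite -addnS !hcoef_split pochSl pochS [poch (a + 1 + k%:R) i.+1]pochS.
have binE : ('C(k + i.+1, k) * i.+1 = (k + i).+1 * 'C(k + i, k))%N.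
  by rewrite mulnC addnS mul_bin_down; congr (_ * _)%N; lia.
apply: (@eq_modulo _ _ _ (- ((-1) ^+ k * poch (a + 1 + k%:R) i * poch (k%:R - M%:R) i
                              * ((k + i)%:R - M%:R)))
                          (('C(k + i.+1, k))%:R * (i.+1)%:R - ((k + i).+1)%:R * ('C(k + i, k))%:R)).
  rewrite [a + k%:R + 1]addrAC addnS -!natr1 !natrD; ring.
by rewrite -!natrM binE subrr.
Qed.

Lemma hcoef_lower a n k :
  hcoef a n.+1 k - (n.+1%:R * (M%:R - n%:R)) * hcoef (a + 1) n k = hcoef (a + 1) n.+1 k.
Proof.
case: (ltnP n.+1 k) => [hk|]; first by rewrite !hcoef_small ?mulr0 ?subr0 //; lia.
rewrite leq_eqVlt ltnS => /orP[/eqP->|hkn].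
  by rewrite (hcoef_small _ (ltnSn n)) mulr0 subr0 !hcoef_diag.
by rewrite -(subnKC hkn) hcoef_lower_interior.
Qed.

(* The bulk of the upper contiguity relation, for 0 < k <= n; it combines
   Pascal's rule with (k+1) C(n,k+1) = (n-k) C(n,k) and a Pochhammer shift. *)
Lemma hcoef_upper_interior (a e : T) k i :
  hcoef (a + 1) (k.+1 + i) k.+1 * ((e + k.+1%:R) ^+ 2 - (a - e) ^+ 2)
  - hcoef (a + 1) (k.+1 + i) k
  - ((a + (k.+1 + i)%:R) * (2 * e - a + M%:R - (k.+1 + i)%:R)) * hcoef a (k.+1 + i) k.+1
  = hcoef a (k.+1 + i).+1 k.+1.
Proof.
set x : T := k%:R; set y : T := i%:R.
set c0 := 'C(k.+1 + i, k.+1); set c1 := 'C(k.+1 + i, k).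
have binSE : 'C(k.+1 + i.+1, k.+1) = (c0 + c1)%N by rewrite addnS binS.
have binE : (k.+1 * c0 = i.+1 * c1)%N by rewrite mul_bin_left; congr (_ * _)%N; lia.
set p := poch (a + 1 + (x + 1)) i; set r := poch (a + (x + 1)) i.
set m := poch (x + 1 - M%:R) i.
have r_shift : r * (a + (x + 1) + y) = (a + (x + 1)) * p.
  by rewrite -pochS pochSl; congr (_ * poch _ _); ring.
have E1 : hcoef (a + 1) (k.+1 + i) k = (-1) ^+ k * c1%:R * ((a + 1 + x) * p)
                                      * ((x - M%:R) * m).
  rewrite addSnnS hcoef_split -addSnnS !pochSl.
  by congr (_ * _ * (_ * poch _ _) * (_ * poch _ _)); rewrite /x; ring.
have E2 : hcoef a (k.+1 + i).+1 k.+1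
          = (-1) ^+ k.+1 * (c0 + c1)%:R * (r * (a + (x + 1) + y)) * (m * (x + 1 - M%:R + y)).
  rewrite -addnS hcoef_split binSE !pochS -natr1; reflexivity.
have E3 : hcoef (a + 1) (k.+1 + i) k.+1 = (-1) ^+ k.+1 * c0%:R * p * m.
  rewrite hcoef_split -natr1; reflexivity.
have E4 : hcoef a (k.+1 + i) k.+1 = (-1) ^+ k.+1 * c0%:R * r * m.
  rewrite hcoef_split -natr1; reflexivity.
have binR : (x + 1) * c0%:R = (y + 1) * c1%:R by rewrite /x /y !natr1 -!natrM binE.
have -> : (k.+1 + i)%:R = x + 1 + y by rewrite natrD -natr1.
rewrite -natr1 -/x E1 E2 E3 E4 exprS natrD.
apply: (@eq_modulo2 _ _ _ (- (-1) ^+ k * m * (r * (a + (x + 1) + y)))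
  ((x + 1) * c0%:R - (y + 1) * c1%:R)
  ((-1) ^+ k * m * (c0%:R * (2 * e + x + 1 - a) + c1%:R * (x - M%:R)))
  (r * (a + (x + 1) + y) - (a + (x + 1)) * p)).
- ring.
- by rewrite binR subrr.
- by rewrite r_shift subrr.
Qed.

Lemma hcoef_upper_zero (a e : T) n :
  hcoef (a + 1) n 0 * ((e + 0%:R) ^+ 2 - (a - e) ^+ 2)
  - ((a + n%:R) * (2 * e - a + M%:R - n%:R)) * hcoef a n 0 = hcoef a n.+1 0.
Proof.
rewrite /hcoef !subn0 !bin0 !addr0 [poch a n.+1]pochSl !pochS.
have a_shift : poch a n * (a + n%:R) - a * poch (a + 1) n = 0.
  by rewrite -pochS pochSl subrr.
apply: (@eq_modulo _ _ _ (- ((2 * e - a + M%:R - n%:R) * poch (0 - M%:R) n)) _ _ a_shift).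
ring.
Qed.

(* Coefficients of the expansion multiplied by phi_(k+1) / phi_k. *)
Definition hcoef_shift (b : T) (n k : nat) : T :=
  if k is k'.+1 then hcoef b n k' else 0.

Lemma hcoef_upper (a e : T) n k :
  hcoef (a + 1) n k * ((e + k%:R) ^+ 2 - (a - e) ^+ 2)
  - hcoef_shift (a + 1) n k
  - ((a + n%:R) * (2 * e - a + M%:R - n%:R)) * hcoef a n k = hcoef a n.+1 k.
Proof.
rewrite /hcoef_shift; case: k => [|k]; first by rewrite subr0 hcoef_upper_zero.
case: (ltnP n.+1 k.+1) => [hk|].
  by rewrite !hcoef_small ?mulr0 ?mul0r ?subr0 //; lia.
rewrite leq_eqVlt ltnS => /orP[/eqP[->]|hkn].
  by rewrite !(hcoef_small _ (ltnSn n)) !hcoef_diag mul0r mulr0 sub0r subr0 exprS mulN1r.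
by rewrite -(subnKC hkn) hcoef_upper_interior.
Qed.
End Coefficients.

Lemma sum_ord_widen (V : zmodType) (f : nat -> V) n m :
  (n <= m)%N -> (forall k, (n <= k)%N -> f k = 0) ->
  \sum_(k < n) f k = \sum_(k < m) f k.
Proof.
move=> hnm hf; rewrite (big_ord_widen m f hnm) big_mkcond /=.
by apply: eq_bigr => k _; case: ltnP => // /hf ->.
Qed.

Section Expansion.
Variables (T : comNzRingType) (M : nat) (e : T) (z : {poly T}).

Definition hbasis (k : nat) : {poly T} := \prod_(i < k) (((e + i%:R) ^+ 2)%:P - z).

Definition hahnG (b : T) (n : nat) : {poly T} := \sum_(k < n.+1) hcoef M b n k *: hbasis k.

Lemma hbasisS k : hbasis k.+1 = hbasis k * (((e + k%:R) ^+ 2)%:P - z).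
Proof. by rewrite /hbasis big_ord_recr. Qed.

Lemma mulz_hbasis k : z * hbasis k = (e + k%:R) ^+ 2 *: hbasis k - hbasis k.+1.
Proof. by rewrite hbasisS -mul_polyC; ring. Qed.

Lemma hahnG0 b : hahnG b 0 = 1.
Proof. by rewrite /hahnG big_ord1 hcoef_diag /hbasis big_ord0 scale1r. Qed.

Lemma hahnG_widen b n m : (n < m)%N -> hahnG b n = \sum_(k < m) hcoef M b n k *: hbasis k.
Proof.
move=> h; rewrite /hahnG.
apply: (@sum_ord_widen _ (fun k => hcoef M b n k *: hbasis k) n.+1) => // k hk.
by rewrite hcoef_small ?scale0r.
Qed.

Lemma hahnG_lower a n :
  hahnG a n.+1 - (n.+1%:R * (M%:R - n%:R)) *: hahnG (a + 1) n = hahnG (a + 1) n.+1.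
Proof.
rewrite (@hahnG_widen _ n n.+2) // /hahnG scaler_sumr -sumrB.
by apply: eq_bigr => k _; rewrite scalerA -scalerBl hcoef_lower.
Qed.

Lemma hahnG_upper a n :
  z * hahnG (a + 1) n - (a - e) ^+ 2 *: hahnG (a + 1) n
  - ((a + n%:R) * (2 * e - a + M%:R - n%:R)) *: hahnG a n = hahnG a n.+1.
Proof.
have shift : \sum_(k < n.+1) hcoef M (a + 1) n k *: hbasis k.+1
           = \sum_(k < n.+2) hcoef_shift M (a + 1) n k *: hbasis k.
  by rewrite [RHS]big_ord_recl scale0r add0r.
have mulzG : z * hahnG (a + 1) n
   = \sum_(k < n.+2) (hcoef M (a + 1) n k * (e + k%:R) ^+ 2) *: hbasis k
     - \sum_(k < n.+2) hcoef_shift M (a + 1) n k *: hbasis k.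
  rewrite -shift -(@sum_ord_widen _
    (fun k => (hcoef M (a + 1) n k * (e + k%:R) ^+ 2) *: hbasis k) n.+1) //; last first.
    by move=> k hk; rewrite hcoef_small ?mul0r ?scale0r.
  rewrite /hahnG mulr_sumr -sumrB; apply: eq_bigr => k _.
  by rewrite -scalerAr mulz_hbasis scalerBr scalerA.
rewrite mulzG !(@hahnG_widen _ n n.+2) // !scaler_sumr -!sumrB.
apply: eq_bigr => k _; rewrite !scalerA -!scalerBl -(hcoef_upper M a e n k).
congr (_ *: _); ring.
Qed.
End Expansion.

Lemma poch_hbasis (T : comNzRingType) (e : T) (y : {poly T}) k :
  poch (e%:P + y) k * poch (e%:P - y) k = hbasis e (y ^+ 2) k.
Proof.
elim: k => [|k IH]; first by rewrite !poch0 mulr1 /hbasis big_ord0.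
rewrite !pochS hbasisS -IH -polyC_natr rmorphXn rmorphD /=; ring.
Qed.

Section Recurrence.
Variables (R : fieldType) (N : nat) (al be : R).
Local Notation P := (dualHahn N al be).

Lemma dualHahn0 : P 0 = 1.
Proof. by []. Qed.

Lemma dualHahn1 : P 1 = 'X - (bcoef al be 0)%:P.
Proof. by rewrite /dualHahn /= mulr1 mulr0 subr0. Qed.

Lemma dualHahnSS m :
  P m.+2 = ('X - (bcoef al be m.+1)%:P) * P m.+1 - (ucoef N al be m.+1)%:P * P m.
Proof.
have HpairS k : Hpair N al be k.+1 = (P k,
    ('X - (bcoef al be k)%:P) * P k - (ucoef N al be k)%:P * (Hpair N al be k).1).
  by rewrite /dualHahn /=; case: (Hpair N al be k).
by rewrite {1}/dualHahn HpairS (HpairS m).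
Qed.

Lemma dualHahn_shiftSS m :
  P m.+2 \Po ('X - 1) = ('X - (1 + bcoef al be m.+1)%:P) * (P m.+1 \Po ('X - 1))
                        - (ucoef N al be m.+1)%:P * (P m \Po ('X - 1)).
Proof.
rewrite dualHahnSS comp_polyB !comp_polyM comp_polyB comp_polyX !comp_polyC.
by rewrite rmorphD /= polyC1 opprD addrA.
Qed.
End Recurrence.

Lemma sixteen_z (R : numFieldType) : 16 * (4^-1 *: 'X : {poly R}) ^+ 2 = 'X * 'X.
Proof.
have h16 : (16 : R) * 4^-1 ^+ 2 = 1 by rewrite exprVn -natrX mulfV // pnatr_eq0.
by rewrite -mul_polyC exprMn -polyC_exp mulrA -[16]polyC_natr -rmorphM /= h16 mul1r expr2.
Qed.

Section Induction.
Variables (R : numFieldType) (a e : R) (M N : nat) (al be : R).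
Hypotheses (hN : N = (2 * M + 1)%N) (hal : al = 2 * a - 1) (hbe : be = 4 * e - 2 * a - 1).
Local Notation P m := (dualHahn N al be m \Po ('X - 1)).
Local Notation G := (hahnG M e ((4^-1 *: 'X) ^+ 2)).

Lemma dualHahn_even_step n :
  P (2 * n) = 16 ^+ n *: G a n ->
  P (2 * n).+1 = 16 ^+ n *: (('X + (al - be)%:P) * G (a + 1) n) ->
  P (2 * n.+1) = 16 ^+ n.+1 *: G a n.+1.
Proof.
move=> IHeven IHodd.
rewrite mulnS add2n dualHahn_shiftSS IHeven IHodd -hahnG_upper /bcoef /ucoef.
move: (sixteen_z R); set z := (4^-1 *: 'X) ^+ 2; clearbody z => hz.
have cast_n : ((2 * n).+1%:R : R) = 2 * n%:R + 1 by rewrite -natr1 natrM.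
have cast_M : ((2 * M + 1)%:R : R) = 2 * M%:R + 1 by rewrite natrD natrM.
rewrite [odd _]/= oddM /= -!mul_polyC hN hal hbe cast_n cast_M.
rewrite !(rmorphD, rmorphB, rmorphM, rmorphN, rmorph1, rmorphXn, rmorph_nat) /= exprS.
apply: (@eq_modulo _ _ _ (- (16 ^+ n * hahnG M e z (a + 1) n)) (16 * z - 'X * 'X)).
  ring.
by rewrite hz subrr.
Qed.

Lemma dualHahn_odd_step n :
  P (2 * n).+1 = 16 ^+ n *: (('X + (al - be)%:P) * G (a + 1) n) ->
  P (2 * n.+1) = 16 ^+ n.+1 *: G a n.+1 ->
  P (2 * n.+1).+1 = 16 ^+ n.+1 *: (('X + (al - be)%:P) * G (a + 1) n.+1).
Proof.
move=> IHodd IHeven; rewrite mulnS add2n in IHeven *.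
rewrite dualHahn_shiftSS IHeven IHodd -hahnG_lower /bcoef /ucoef.
have cast_n : ((2 * n).+2%:R : R) = 2 * n%:R + 2 by rewrite -addn2 natrD natrM.
have cast_M : ((2 * M + 1)%:R : R) = 2 * M%:R + 1 by rewrite natrD natrM.
rewrite [odd _]/= oddM /= -!mul_polyC hN hal hbe cast_n cast_M -[n.+1%:R]natr1.
rewrite !(rmorphD, rmorphB, rmorphM, rmorphN, rmorph1, rmorphXn, rmorph_nat) /= exprS.
ring.
Qed.

Lemma dualHahn_shift_expansion n :
  P (2 * n) = 16 ^+ n *: G a n /\
  P (2 * n).+1 = 16 ^+ n *: (('X + (al - be)%:P) * G (a + 1) n).
Proof.
elim: n => [|n [IHeven IHodd]].
  rewrite !hahnG0 !expr0 !scale1r mulr1 dualHahn0 dualHahn1 comp_polyC.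
  rewrite comp_polyB comp_polyX comp_polyC /bcoef hal hbe /=.
  rewrite !(rmorphD, rmorphB, rmorphM, rmorphN, rmorph1) /=.
  by split=> //; ring.
have IHeven' := dualHahn_even_step IHeven IHodd.
by split=> //; apply: dualHahn_odd_step.
Qed.
End Induction.

Lemma F32_hahnG (R : numFieldType) (M n : nat) (b e : R) (y : {poly R}) :
  (n <= M)%N -> (forall k, (k <= n)%N -> poch b k != 0) ->
  (poch (- M%:R) n * poch b n) *: F32 n (e%:P + y) (e%:P - y) (- M%:R) b
  = hahnG M e (y ^+ 2) b n.
Proof.
move=> hnM hb; rewrite /F32 /hahnG scaler_sumr; apply: eq_bigr => -[k /= hkn] _.
rewrite poch_hbasis scalerA; congr (_ *: _).
rewrite ltnS in hkn; rewrite (poch_negn _ hkn) -(subnKC hkn) hcoef_split !pochD.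
have hM : (poch (- M%:R) k : R) != 0 by apply: poch_negn_neq0; apply: leq_trans hnM.
have hbk := hb k hkn.
have hfact : (k`!)%:R != 0 :> R by rewrite pnatr_eq0 -lt0n fact_gt0.
rewrite [- M%:R + _]addrC natrM; field.
by rewrite hbk hM hfact.
Qed.

Lemma odd_halfE (N : nat) : odd N -> N = (2 * (N.-1)./2 + 1)%N.
Proof.
move=> hN; have := odd_double_half N; rewrite hN add1n => hNE.
by rewrite -{2}hNE /= doubleK mul2n addn1.
Qed.

Theorem mainTheorem6 (R : realFieldType) (N : nat) (al be : R)
  (hN : odd N)
  (ha1 : forall k : nat, (k <= (N.-1)./2)%N -> poch ((al + 1) / 2) k != 0)
  (ha3 : forall k : nat, (k <= (N.-1)./2)%N -> poch ((al + 3) / 2) k != 0)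
  (n : nat) (hn : (n <= (N.-1)./2)%N) :
  let eta := (al + be + 2) / 4 in
  let a2 := eta%:P + 4^-1 *: 'X in
  let a3 := eta%:P - 4^-1 *: 'X in
  let b1 := - ((N%:R - 1) / 2) in
  dualHahn N al be (2 * n) \Po ('X - 1)
    = (16 ^+ n * poch ((1 - N%:R) / 2) n * poch ((al + 1) / 2) n)
        *: F32 n a2 a3 b1 ((al + 1) / 2)
  /\
  dualHahn N al be (2 * n).+1 \Po ('X - 1)
    = (16 ^+ n * poch ((1 - N%:R) / 2) n * poch ((al + 3) / 2) n)
        *: (('X + (al - be)%:P) * F32 n a2 a3 b1 ((al + 3) / 2)).
Proof.
move=> eta a2 a3 b1.
set M := (N.-1)./2 in ha1 ha3 hn.
have hNM : N = (2 * M + 1)%N := odd_halfE hN.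
have hNr : N%:R = 2 * M%:R + 1 :> R by rewrite hNM natrD natrM.
have -> : b1 = - M%:R by rewrite /b1 hNr; field.
have -> : (1 - N%:R) / 2 = - M%:R :> R by rewrite hNr; field.
set a := (al + 1) / 2 in ha1 *.
have a3E : (al + 3) / 2 = a + 1 by rewrite /a; field.
rewrite a3E in ha3 *.
have hal : al = 2 * a - 1 by rewrite /a; field.
have hbe : be = 4 * eta - 2 * a - 1 by rewrite /eta /a; field.
have [-> ->] := dualHahn_shift_expansion hNM hal hbe n.
rewrite /a2 /a3; split.
- rewrite -mulrA -scalerA F32_hahnG // => k hk.
  by apply: ha1; apply: leq_trans hn.
- rewrite -mulrA -scalerA; congr (_ *: _).
  rewrite scalerAr F32_hahnG // => k hk.
  by apply: ha3; apply: leq_trans hn.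
Qed.
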